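(* For every $k\ge 0$, the complete graph $K_{3k+4}$ is a semi-arc $k$-visibility graph.
   Context: A semi-arc $k$-visibility representation is a finite collection of pairwise disjoint circular arcs centered at a common point $O$, all starting on one common radial ray from $O$ and extending counterclockwise from it. A line of sight is a segment contained in a line through $O$ (it may pass through $O$) with endpoints on two arcs and intersecting at most $k$ other arcs (an arc met twice by the radial line is counted once). The semi-arc $k$-visibility graph has one vertex per arc, two vertices being adjacent when their arcs are joined by a line of sight. *)

From Stdlib Require Import Reals.
From mathcomp Require Import all_boot.

Set Implicit Arguments.
Unset Strict Implicit.
Unset Printing Implicit Defensive.

Local Open Scope R_scope.

(* Points of the plane; the common center O is the origin (0,0) and the
   common starting ray is the positive x-axis (WLOG by a rigid motion). *)
Definition point := (R * R)%type.

Definition on_arc (r th : R) (p : point) : Prop :=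
  exists a : R, 0 <= a <= th /\ p = (r * cos a, r * sin a).

Record semi_arc_rep (T : finType) := SemiArcRep {
  radius : T -> R;
  extent : T -> R
}.

Definition arc (T : finType) (A : semi_arc_rep T) (i : T) (p : point) : Prop :=
  on_arc (radius A i) (extent A i) p.

Definition wf_rep (T : finType) (A : semi_arc_rep T) : Prop :=
  (forall i, 0 < radius A i) /\
  (forall i, 0 < extent A i < 2 * PI) /\
  (forall i j p, i <> j -> arc A i p -> arc A j p -> False).

Definition seg_pt (p q : point) (s : R) : point :=
  (fst p + s * (fst q - fst p), snd p + s * (snd q - snd p)).

Definition collinear_O (p q : point) : Prop :=
  fst p * snd q - snd p * fst q = 0.

(* Arc l meets the closed segment [p, q] (counted once however often met). *)
Definition meets_seg (T : finType) (A : semi_arc_rep T) (l : T) (p q : point) : Prop :=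
  exists s : R, 0 <= s <= 1 /\ arc A l (seg_pt p q s).

Definition line_of_sight (k : nat) (T : finType) (A : semi_arc_rep T) (i j : T) : Prop :=
  exists p q : point,
    arc A i p /\ arc A j q /\ collinear_O p q /\
    exists S : {set T}, (#|S| <= k)%N /\
      forall l, l <> i -> l <> j -> meets_seg A l p q -> l \in S.

Definition vis_adj (k : nat) (T : finType) (A : semi_arc_rep T) (i j : T) : Prop :=
  i <> j /\ line_of_sight k A i j.

Definition is_semi_arc_k_vis_graph (k : nat) (T : finType) (e : rel T) : Prop :=
  exists A : semi_arc_rep T, wf_rep A /\ forall i j : T, e i j <-> vis_adj k A i j.

Definition complete_graph (n : nat) : rel 'I_n := fun i j => i != j.
Arguments complete_graph n : clear implicits.

From Pilot Require Import Defs.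
From Stdlib Require Import Reals Lra Lia.
From mathcomp Require Import all_boot zify.

(* Give arc l (for 0 <= l <= 3k+3) radius l+1 and extent (2l+2k+1) steps,
   where a step is PI/(4k+5), so that all extents lie strictly between 0 and
   2PI and longer arcs lie further out.  Two arcs i < j see each other
   - along the ray through the end of arc i when j <= i+k+1: only the j-i-1
     arcs in between are crossed;
   - otherwise along a line through O, leaving arc i at an angle psi and
     reaching arc j at psi + PI.  For j <= i+2k+2 take psi + PI = the end of
     arc j: then only inner arcs ending after psi are crossed, at most
     i - (j-2k-2) <= k of them.  For j > i+2k+2 take psi = the end of arc i:
     then only the arcs l with i+2k+3 <= l < j are crossed, at most k since
     j <= 3k+3. *)

Set Implicit Arguments.
Unset Strict Implicit.

Local Open Scope R_scope.

Lemma cos_eq1_small z : -2 * PI < z < 2 * PI -> cos z = 1 -> z = 0.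
Proof.
move=> z_bd cos_z.
have sin_half : sin (z / 2) = 0.
  have := cos_2a_sin (z / 2); rewrite (_ : 2 * (z / 2) = z); last by field.
  by move=> E; apply: Rsqr_0_uniq; rewrite /Rsqr; lra.
have [m z_eq] := sin_eq_0_0 _ sin_half.
have PI_pos := PI_RGT_0.
have m_bd : (-1 < m < 1)%Z.
  split; apply: lt_IZR; apply: (Rmult_lt_reg_r PI); lra.
have m0 : m = 0%Z by lia.
by move: z_eq; rewrite m0 /=; lra.
Qed.

Lemma cos_sin_inj x y : 0 <= x < 2 * PI -> 0 <= y < 2 * PI ->
  cos x = cos y -> sin x = sin y -> x = y.
Proof.
move=> x_bd y_bd cos_xy sin_xy.
have : cos (x - y) = 1.
  by rewrite cos_minus cos_xy sin_xy; have := sin2_cos2 y; rewrite /Rsqr; lra.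
move/cos_eq1_small; lra.
Qed.

Definition polar (r a : R) : point := (r * cos a, r * sin a).

Lemma polar_addPI r a : polar r (a + PI) = polar (- r) a.
Proof. by rewrite /polar neg_cos neg_sin; f_equal; ring. Qed.

Lemma seg_pt_polar t1 t2 a s :
  seg_pt (polar t1 a) (polar t2 a) s = polar (t1 + s * (t2 - t1)) a.
Proof. by rewrite /seg_pt /polar /=; f_equal; ring. Qed.

Lemma collinear_O_polar t1 t2 a : collinear_O (polar t1 a) (polar t2 a).
Proof. rewrite /collinear_O /polar /=; ring. Qed.

Lemma norm2_polar r a : fst (polar r a) ^ 2 + snd (polar r a) ^ 2 = r ^ 2.
Proof. by rewrite /polar /=; have := sin2_cos2 a; rewrite /Rsqr; nra. Qed.

Lemma on_arc_norm2 r th p : on_arc r th p -> fst p ^ 2 + snd p ^ 2 = r ^ 2.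
Proof. by case=> a [_ ->]; exact: norm2_polar. Qed.

Lemma on_arc_polar r th a : 0 <= a <= th -> on_arc r th (polar r a).
Proof. by exists a. Qed.

Lemma polar_eq_pos r t a c : 0 < r -> 0 < t -> polar t a = polar r c ->
  t = r /\ cos a = cos c /\ sin a = sin c.
Proof.
move=> r_pos t_pos E.
have tr : t = r.
  have := norm2_polar t a; rewrite E norm2_polar => sq; nra.
subst t; case: E => Ecos Esin.
by split; [|split]; apply: (Rmult_eq_reg_l r); lra.
Qed.

Lemma on_arc_polar_pos r th t a : 0 < r -> 0 < t -> 0 <= a < 2 * PI ->
  th < 2 * PI -> on_arc r th (polar t a) -> t = r /\ a <= th.
Proof.
move=> r_pos t_pos a_bd th_bd [c [c_bd E]].
have [tr [Ecos Esin]] := polar_eq_pos r_pos t_pos E.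
by split=> //; rewrite (cos_sin_inj a_bd _ Ecos Esin); lra.
Qed.

Lemma on_arc_polar_neg r th t a : 0 < r -> t < 0 -> 0 <= a -> a + PI < 2 * PI ->
  th < 2 * PI -> on_arc r th (polar t a) -> t = - r /\ a + PI <= th.
Proof.
move=> r_pos t_neg a_ge0 a_bd th_bd.
rewrite -(Ropp_involutive t) -polar_addPI => on_arc_t.
have PI_pos := PI_RGT_0.
have [] := on_arc_polar_pos r_pos _ _ th_bd on_arc_t; lra.
Qed.

Lemma not_on_arc_polar0 r th a : 0 < r -> ~ on_arc r th (polar 0 a).
Proof. by move=> r_pos /on_arc_norm2; rewrite norm2_polar; nra. Qed.

Lemma line_of_sight_sym k (T : finType) (A : semi_arc_rep T) i j :
  line_of_sight k A i j -> line_of_sight k A j i.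
Proof.
case=> [p [q [arc_p [arc_q [coll [S [card_S block]]]]]]].
exists q, p; do 3 split=> //; first by move: coll; rewrite /collinear_O; lra.
exists S; split=> // l l_j l_i [s [s_bd arc_l]]; apply: block => //.
exists (1 - s); split; first lra.
by rewrite (_ : seg_pt p q (1 - s) = seg_pt q p s) // /seg_pt; f_equal; ring.
Qed.

Lemma line_of_sight_polar k (T : finType) (A : semi_arc_rep T) i j t1 t2 a
    (S : {set T}) :
  Defs.arc A i (polar t1 a) -> Defs.arc A j (polar t2 a) -> (#|S| <= k)%N ->
  (forall l t, l <> i -> l <> j -> Rmin t1 t2 <= t <= Rmax t1 t2 ->
     Defs.arc A l (polar t a) -> l \in S) ->
  line_of_sight k A i j.
Proof.
move=> arc_i arc_j card_S block.
exists (polar t1 a), (polar t2 a); do 3 split=> //; first exact: collinear_O_polar.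
exists S; split=> // l l_i l_j [s [s_bd]]; rewrite seg_pt_polar => arc_l.
apply: (block _ _ l_i l_j _ arc_l); rewrite /Rmin /Rmax.
by case: Rle_dec => [le_t | /Rnot_le_lt lt_t]; split; nra.
Qed.

Lemma card_ord_interval n lo hi :
  (#|[set l : 'I_n | lo <= l < hi]| <= hi - lo)%N.
Proof.
rewrite cardE -(size_map val) -[(hi - lo)%N](size_iota lo).
apply: uniq_leq_size; first by rewrite map_inj_uniq ?enum_uniq //; exact: val_inj.
move=> x /mapP [l]; rewrite mem_enum inE => /andP [lo_l l_hi] ->.
by rewrite /= mem_iota; lia.
Qed.

Section Construction.

Variable k : nat.

Let n := (3 * k + 4)%N.

Definition step := PI / INR (4 * k + 5).

Definition angle (m : nat) := INR m * step.

Definition arc_radius (l : nat) := INR l.+1.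

Definition extent_steps (l : nat) := (2 * l + 2 * k + 1)%N.

Definition arcs_rep : semi_arc_rep 'I_n :=
  SemiArcRep (fun l : 'I_n => arc_radius l) (fun l => angle (extent_steps l)).

Lemma step_pos : 0 < step.
Proof. by apply: Rdiv_lt_0_compat; [exact: PI_RGT_0 | apply: lt_0_INR; lia]. Qed.

Lemma angle_half_turn : angle (4 * k + 5) = PI.
Proof. by rewrite /angle /step; field; apply: not_0_INR; lia. Qed.

Lemma angleD m1 m2 : angle (m1 + m2) = angle m1 + angle m2.
Proof. by rewrite /angle plus_INR; ring. Qed.

Lemma angle_addPI m : angle m + PI = angle (m + (4 * k + 5)).
Proof. by rewrite angleD angle_half_turn. Qed.

Lemma angle_ge0 m : 0 <= angle m.
Proof. by apply: Rmult_le_pos; [exact: pos_INR | exact: Rlt_le step_pos]. Qed.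

Lemma angle_le m1 m2 : angle m1 <= angle m2 <-> (m1 <= m2)%N.
Proof.
split=> [le_a | /leP le_m].
- by apply/leP/INR_le/(Rmult_le_reg_r step); first exact: step_pos.
- by apply: Rmult_le_compat_r; [exact: Rlt_le step_pos | exact: le_INR].
Qed.

Lemma angle_lt_2PI m : (m < 8 * k + 10)%N -> angle m < 2 * PI.
Proof.
move=> lt_m.
have -> : 2 * PI = angle (4 * k + 5 + (4 * k + 5)) by rewrite angleD angle_half_turn; ring.
by apply: Rmult_lt_compat_r; [exact: step_pos | apply/lt_INR/ltP; lia].
Qed.

Lemma arc_radius_pos l : 0 < arc_radius l.
Proof. by apply: lt_0_INR; lia. Qed.

Lemma arc_radius_le l1 l2 : arc_radius l1 <= arc_radius l2 -> (l1 <= l2)%N.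
Proof. by move/INR_le/leP. Qed.

Lemma extent_steps_lt (l : 'I_n) : (extent_steps l < 8 * k + 10)%N.
Proof. by have := ltn_ord l; rewrite /extent_steps /n; lia. Qed.

Lemma wf_arcs_rep : wf_rep arcs_rep.
Proof.
split; [|split] => [l | l | i j p ne_ij /on_arc_norm2 norm_i /on_arc_norm2].
- exact: arc_radius_pos.
- split; last exact/angle_lt_2PI/extent_steps_lt.
  by apply: Rmult_lt_0_compat; [apply: lt_0_INR; rewrite /extent_steps; lia | exact: step_pos].
- rewrite norm_i /= => sq; apply: ne_ij; apply: val_inj.
  have := arc_radius_pos i; have := arc_radius_pos j => pos_j pos_i.
  have E : arc_radius i = arc_radius j by nra.
  by apply/anti_leq/andP; split; apply: arc_radius_le; rewrite /=; lra.
Qed.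

Lemma arc_rep_endpoint (l : 'I_n) m :
  (m <= extent_steps l)%N -> Defs.arc arcs_rep l (polar (arc_radius l) (angle m)).
Proof. by move=> le_m; apply: on_arc_polar; split; [exact: angle_ge0 | exact/angle_le]. Qed.

Lemma arc_rep_polar_pos (l : 'I_n) t m : 0 < t -> (m < 8 * k + 10)%N ->
  Defs.arc arcs_rep l (polar t (angle m)) -> t = arc_radius l /\ (m <= extent_steps l)%N.
Proof.
move=> t_pos m_lt /on_arc_polar_pos [] //.
- exact: arc_radius_pos.
- by split; [exact: angle_ge0 | exact: angle_lt_2PI].
- exact/angle_lt_2PI/extent_steps_lt.
- by move=> -> /angle_le.
Qed.

Lemma arc_rep_polar_neg (l : 'I_n) t m : t < 0 -> (m < 4 * k + 5)%N ->
  Defs.arc arcs_rep l (polar t (angle m)) ->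
  t = - arc_radius l /\ (m + (4 * k + 5) <= extent_steps l)%N.
Proof.
move=> t_neg m_lt /on_arc_polar_neg [] //; rewrite ?angle_addPI.
- exact: arc_radius_pos.
- exact: angle_ge0.
- by apply: angle_lt_2PI; lia.
- exact/angle_lt_2PI/extent_steps_lt.
- by move=> -> /angle_le.
Qed.

Lemma line_of_sight_along_ray (i j : 'I_n) :
  (i < j <= i + k + 1)%N -> line_of_sight k arcs_rep i j.
Proof.
move=> /andP [lt_ij le_j].
have le_r : arc_radius i <= arc_radius j by apply/le_INR/leP; lia.
apply: (line_of_sight_polar (t2 := arc_radius j) (a := angle (extent_steps i))
          (S := [set l : 'I_n | (i < l < j)%N])).
- exact: arc_rep_endpoint.
- by apply: arc_rep_endpoint; rewrite /extent_steps; lia.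
- by apply: leq_trans (card_ord_interval _ _ _) _; lia.
move=> l t ne_li ne_lj; rewrite Rmin_left // Rmax_right // inE => t_bd.
have t_pos := arc_radius_pos i.
case/arc_rep_polar_pos; [lra | exact: extent_steps_lt | move=> t_eq _].
have ne_li' : (l : nat) <> i by move/val_inj.
have ne_lj' : (l : nat) <> j by move/val_inj.
have le_il : (i <= l)%N by apply: arc_radius_le; lra.
have le_lj : (l <= j)%N by apply: arc_radius_le; lra.
lia.
Qed.

Lemma line_of_sight_through_center (i j : 'I_n) m lo hi :
  (m <= extent_steps i)%N -> (m + (4 * k + 5) <= extent_steps j)%N ->
  (m < 4 * k + 5)%N -> (hi - lo <= k)%N ->
  (forall l : nat,
     (l < i)%N /\ (m <= extent_steps l)%N \/
     (l < j)%N /\ (m + (4 * k + 5) <= extent_steps l)%N -> (lo <= l < hi)%N) ->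
  line_of_sight k arcs_rep i j.
Proof.
move=> m_i m_j m_lt card_bd in_interval.
have opp_le : - arc_radius j <= arc_radius i.
  by have := arc_radius_pos i; have := arc_radius_pos j; lra.
apply: (line_of_sight_polar (t2 := - arc_radius j) (a := angle m)
          (S := [set l : 'I_n | (lo <= l < hi)%N])).
- exact: arc_rep_endpoint.
- by rewrite -polar_addPI angle_addPI; exact: arc_rep_endpoint.
- exact: leq_trans (card_ord_interval _ _ _) card_bd.
move=> l t ne_li ne_lj; rewrite Rmin_right // Rmax_left // inE => t_bd arc_l.
have ne_li' : (l : nat) <> i by move/val_inj.
have ne_lj' : (l : nat) <> j by move/val_inj.
apply: in_interval; case: (Rtotal_order t 0) => [t_neg | [t0 | t_pos]].
- have [t_eq m_l] := arc_rep_polar_neg t_neg m_lt arc_l.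
  have : (l <= j)%N by apply: arc_radius_le; lra.
  by right; split; first lia.
- by exfalso; move: arc_l; rewrite t0; apply: not_on_arc_polar0; exact: arc_radius_pos.
- have m_lt2 : (m < 8 * k + 10)%N by lia.
  have [t_eq m_l] := arc_rep_polar_pos t_pos m_lt2 arc_l.
  have : (l <= i)%N by apply: arc_radius_le; lra.
  by left; split; first lia.
Qed.

Lemma line_of_sight_lt (i j : 'I_n) : (i < j)%N -> line_of_sight k arcs_rep i j.
Proof.
move=> lt_ij; have lt_j : (j < 3 * k + 4)%N := ltn_ord j.
case: (leqP j (i + k + 1)) => [near | far1].
  by apply: line_of_sight_along_ray; rewrite lt_ij.
case: (leqP j (i + 2 * k + 2)) => [mid | far2].
- apply: (line_of_sight_through_center (m := 2 * j - 2 * k - 4) (lo := j - (2 * k + 2)) (hi := i));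
    try move=> l; cbv [extent_steps]; lia.
- apply: (line_of_sight_through_center (m := extent_steps i) (lo := i + 2 * k + 3) (hi := j));
    try move=> l; cbv [extent_steps]; lia.
Qed.

End Construction.

Theorem mainTheorem7 (k : nat) :
  is_semi_arc_k_vis_graph k (complete_graph (3 * k + 4)).
Proof.
exists (arcs_rep k); split; first exact: wf_arcs_rep.
move=> i j; rewrite /complete_graph /vis_adj; split=> [ne_ij | [ne_ij _]]; last exact/eqP.
split; first exact/eqP.
case: (ltngtP i j) => [lt_ij | lt_ji | eq_ij].
- exact: line_of_sight_lt.
- exact/line_of_sight_sym/line_of_sight_lt.
- by rewrite (val_inj eq_ij) eqxx in ne_ij.
Qed.
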